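(* Any circuit on $n$ qubits composed entirely of controlled-not gates computes an operator that can be embedded, using $O(n^2)$ ancillae, in a quantum circuit of depth $O(\log n)$ (with absolute implied constants). Consequently, any family $(C_n)_{n\ge1}$ of such circuits, $C_n$ acting on $n$ qubits, defines a family of operators belonging to $\mathbf{QNC}^1$.
   Context: Qubits have computational basis $|0\rangle,|1\rangle$. The controlled-not gate on (control, target) is the two-qubit unitary $|a,b\rangle\mapsto|a,a\oplus b\rangle$. A circuit composed of controlled-not gates is any finite product of such gates applied to pairs of the $n$ qubits. A one-layer circuit is a tensor product of arbitrary one-qubit and two-qubit unitary gates acting on pairwise disjoint sets of qubits; a quantum circuit of depth $d$ is a product of $d$ one-layer circuits. An operator $F$ on $n$ qubits is embedded in an operator $M$ on $n+m$ qubits using $m$ ancillae if $M(|\psi\rangle\otimes|0\cdots0\rangle)=(F|\psi\rangle)\otimes|0\cdots0\rangle$ for all $|\psi\rangle$. A family $F=(F(n))_{n\ge1}$, $F(n)$ a unitary on $n$ qubits, is in $\mathbf{QNC}^1$ if there are constants $c_1,c_2,j$ such that for all $n$, $F(n)$ can be embedded in a quantum circuit of depth at most $c_1\log n$ using at most $c_2n^j$ ancillae. *)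

From HB Require Import structures.
From mathcomp Require Import all_boot all_order all_algebra.
Set Implicit Arguments. Unset Strict Implicit. Unset Printing Implicit Defensive.
Import GRing.Theory Num.Theory.
Local Open Scope ring_scope.

Section Quantum.
Variable C : numClosedFieldType.

Definition basis (n : nat) := {ffun 'I_n -> bool}.

(* an operator on a finite-dimensional space with basis T, given by its
   matrix entries  A x y = <x|A|y> *)
Definition opT (T : finType) := T -> T -> C.
Definition op (n : nat) := opT (basis n).

Definition opT_id (T : finType) : opT T := fun x y => (x == y)%:R.
Definition opT_mul (T : finType) (A B : opT T) : opT T :=
  fun x z => \sum_(y : T) A x y * B y z.
Definition opT_adj (T : finType) (A : opT T) : opT T := fun x y => (A y x)^*.
Definition unitaryT (T : finType) (A : opT T) : Prop :=
  (forall x y, opT_mul A (opT_adj A) x y = opT_id x y) /\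
  (forall x y, opT_mul (opT_adj A) A x y = opT_id x y).

Definition apply (T : finType) (A : opT T) (v : T -> C) : T -> C :=
  fun x => \sum_(y : T) A x y * v y.

Inductive gate (n : nat) :=
| G1 of 'I_n & opT bool
| G2 of 'I_n & 'I_n & opT (bool * bool)%type.

Definition gate_wf n (g : gate n) : Prop :=
  match g with
  | G1 _ U => unitaryT U
  | G2 i j U => i <> j /\ unitaryT U
  end.

Definition gate_supp n (g : gate n) : {set 'I_n} :=
  match g with
  | G1 i _ => [set i]
  | G2 i j _ => [set i; j]
  end.

Definition gate_entry n (g : gate n) (x y : basis n) : C :=
  match g with
  | G1 i U => U (x i) (y i)
  | G2 i j U => U (x i, x j) (y i, y j)
  end.

Definition layer n := seq (gate n).

Definition layer_wf n (L : layer n) : Prop :=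
  foldr (fun g P => gate_wf g /\ P) True L /\
  pairwise (fun g h => [disjoint gate_supp g & gate_supp h]) L.

Definition layer_supp n (L : layer n) : {set 'I_n} :=
  \bigcup_(g <- L) gate_supp g.

(* the tensor product of the gates, identity on the remaining qubits *)
Definition layer_op n (L : layer n) : op n :=
  fun x y => (\prod_(g <- L) gate_entry g x y) *
             ([forall k, (k \notin layer_supp L) ==> (x k == y k)])%:R.

(* a circuit: list of layers, the head being applied first; depth = size *)
Definition circuit n := seq (layer n).

Definition circuit_wf n (ls : circuit n) : Prop := foldr (fun L P => layer_wf L /\ P) True ls.

Fixpoint circuit_op n (ls : circuit n) : op n :=
  match ls with
  | [::] => @opT_id _
  | L :: ls' => opT_mul (circuit_op ls') (layer_op L)
  end.

(* |psi> (x) |0...0> on n + m qubits (ancillae are the last m qubits) *)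
Definition pad n m (v : basis n -> C) : basis (n + m) -> C :=
  fun z => if [forall k : 'I_m, ~~ z (rshift n k)]
           then v [ffun i => z (lshift m i)] else 0.

Definition embeds n m (F : op n) (M : op (n + m)) : Prop :=
  forall (v : basis n -> C) (z : basis (n + m)),
    apply M (@pad n m v) z = @pad n m (apply F v) z.

Definition cnot_map n (c t : 'I_n) (y : basis n) : basis n :=
  [ffun k => if k == t then addb (y c) (y t) else y k].

Definition cnot_op n (c t : 'I_n) : op n :=
  fun x y => (x == cnot_map c t y)%:R.

(* a CNOT circuit: list of (control, target) pairs, head applied first *)
Definition cnot_circuit n := seq ('I_n * 'I_n)%type.

Definition cnot_wf n (s : cnot_circuit n) : bool := all (fun p => p.1 != p.2) s.

Fixpoint cnot_circuit_op n (s : cnot_circuit n) : op n :=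
  match s with
  | [::] => @opT_id _
  | p :: s' => opT_mul (cnot_circuit_op s') (cnot_op p.1 p.2)
  end.

(* depth <= c1 * log n is expressed with the integer log trunc_log 2 n;
   for n >= 1 this is equivalent (up to the constant) to c1 * log n. *)
Definition in_QNC1 (F : forall n : nat, op n) : Prop :=
  (forall n, (0 < n)%N -> unitaryT (F n)) /\
  exists c1 c2 j : nat, forall n : nat, (0 < n)%N ->
    exists m : nat, (m <= c2 * n ^ j)%N /\
      exists ls : circuit (n + m),
        circuit_wf ls /\ (size ls <= c1 * trunc_log 2 n)%N /\
        embeds (F n) (circuit_op ls).

End Quantum.

From mathcomp Require Import all_boot all_order all_algebra zify.
Set Implicit Arguments. Unset Strict Implicit. Unset Printing Implicit Defensive.
Import GRing.Theory Num.Theory.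

(* A CNOT circuit acts on basis states by an invertible GF(2)-linear map f, and CNOT
   gates on pairwise disjoint qubits form a single layer.  With N = 2^r >= n, f is
   computed in depth 2r + 2 with O(N n) clean ancillae: r doubling layers fan each
   input bit out to N copies, one layer xors into row i of an n x N array the copies
   of the bits x_j with f(e_j)_i = 1, and r halving layers fold each row into its
   first entry.  Computing f x this way, xoring it into an output register and running
   the computation backwards leaves x and f x with clean ancillae; doing the same with
   f^-1 from the output register to the input register erases x, and three layers of
   CNOTs swap the two registers.  For r = trunc_log 2 n + 1 this is depth
   8r + 13 = O(log n) with n + 2Nn <= 5n^2 ancillae. *)

Section ParallelCnotLayers.
Variable Q : finType.

(* A layer of CNOT gates, encoded as the map sending each target to its control. *)
Definition cnot_layer := Q -> option Q.

Implicit Types (s : cnot_layer) (ss : seq cnot_layer) (y : {ffun Q -> bool}).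

Definition layer_map s y : {ffun Q -> bool} :=
  [ffun q => if s q is Some c then y q (+) y c else y q].

Definition layers_map ss y := foldl (fun y s => layer_map s y) y ss.

Definition parallel s : bool :=
  [forall t, if s t is Some c then
     [&& c != t, s c == None & [forall t', (s t' == Some c) ==> (t' == t)]]
   else true].

Lemma parallelP s :
  reflect (forall t c, s t = Some c ->
             [/\ c != t, s c = None & forall t', s t' = Some c -> t' = t])
          (parallel s).
Proof.
apply: (iffP forallP) => [H t c Etc | H t].
  move: (H t); rewrite Etc => /and3P[ct /eqP sc /forallP Ht].
  by split=> // t' Et'; apply/eqP; move: (Ht t'); rewrite Et' eqxx.
case Et: (s t) => [c|] //; have [-> -> Ht] := H _ _ Et.
by apply/forallP => t'; apply/implyP => /eqP/Ht->.
Qed.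

Definition avoids (D : pred Q) s : bool :=
  [forall t, if s t is Some c then ~~ D t && ~~ D c else true].

Lemma avoidsP D s :
  reflect (forall t c, s t = Some c -> ~~ D t /\ ~~ D c) (avoids D s).
Proof.
apply: (iffP forallP) => [H t c Etc | H t].
  by move: (H t); rewrite Etc => /andP.
by case Et: (s t) => [c|] //; have [-> ->] := H _ _ Et.
Qed.

Lemma layers_map_cat ss1 ss2 y :
  layers_map (ss1 ++ ss2) y = layers_map ss2 (layers_map ss1 y).
Proof. exact: foldl_cat. Qed.

Lemma layers_map_rcons ss s y :
  layers_map (rcons ss s) y = layer_map s (layers_map ss y).
Proof. exact: foldl_rcons. Qed.

Lemma layer_mapK s : parallel s -> involutive (layer_map s).
Proof.
move=> /parallelP sP y; apply/ffunP => q; rewrite !ffunE.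
case Eq: (s q) => [c|] //; have [_ Ec _] := sP _ _ Eq.
by rewrite ffunE Ec -addbA addbb addbF.
Qed.

Lemma layers_mapK ss : all parallel ss -> cancel (layers_map ss) (layers_map (rev ss)).
Proof.
elim: ss => //= s ss IH /andP[sP ssP] y.
by rewrite rev_cons layers_map_rcons IH // layer_mapK.
Qed.

Section Avoiding.
Variable D : pred Q.

Lemma layers_map_avoided ss y q : all (avoids D) ss -> D q -> layers_map ss y q = y q.
Proof.
elim: ss y => //= s ss IH y /andP[/avoidsP sD ssD] Dq; rewrite IH // ffunE.
by case Eq: (s q) => [c|] //; have [] := sD _ _ Eq; rewrite Dq.
Qed.

Lemma layers_map_eq_off ss y1 y2 : all (avoids D) ss ->
  {in predC D, y1 =1 y2} -> {in predC D, layers_map ss y1 =1 layers_map ss y2}.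
Proof.
elim: ss y1 y2 => //= s ss IH y1 y2 /andP[/avoidsP sD ssD] y12; apply: IH => // q Dq.
rewrite !ffunE; case Eq: (s q) => [c|]; last exact: y12.
by have [_ Dc] := sD _ _ Eq; rewrite !y12.
Qed.

Lemma layers_map_uncompute ss cp y q :
  all parallel ss -> all (avoids D) ss -> (forall t c, cp t = Some c -> D t) ->
  layers_map (ss ++ cp :: rev ss) y q =
    if D q then layer_map cp (layers_map ss y) q else y q.
Proof.
move=> ssP ssD cpD; rewrite layers_map_cat /=.
have revD : all (avoids D) (rev ss) by rewrite all_rev.
case: ifP => Dq; first exact: layers_map_avoided.
rewrite (@layers_map_eq_off _ _ (layers_map ss y)) ?layers_mapK ?inE ?Dq // => q' Dq'.
rewrite ffunE; case E: (cp q') => [c|] //.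
by move: Dq'; rewrite inE /= (cpD _ _ E).
Qed.

End Avoiding.
End ParallelCnotLayers.

Arguments parallel {Q} s.

Section Relabel.
Variables (Q Q' : finType) (e : Q -> Q') (e' : Q' -> Q).
Hypotheses (eK : cancel e e') (e'K : cancel e' e).

Definition relabel (s : cnot_layer Q) : cnot_layer Q' := fun k => omap e (s (e' k)).

Definition pull (y : {ffun Q' -> bool}) : {ffun Q -> bool} := [ffun q => y (e q)].

Lemma pull_inj : injective pull.
Proof.
move=> y1 y2 /ffunP y12; apply/ffunP => k.
by move: (y12 (e' k)); rewrite !ffunE e'K.
Qed.

Lemma pull_layers_map ss y : pull (layers_map (map relabel ss) y) = layers_map ss (pull y).
Proof.
elim: ss y => //= s ss IH y; rewrite IH; congr layers_map.
by apply/ffunP => q; rewrite !ffunE /relabel eK; case: (s q) => [c|] /=; rewrite ?ffunE.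
Qed.

Lemma relabel_parallel s : parallel s -> parallel (relabel s).
Proof.
move=> /parallelP sP; apply/parallelP => k c'; rewrite /relabel.
case Ek: (s (e' k)) => [c|] //= [<-]; have [ck sc cinj] := sP _ _ Ek; split.
- by apply: contraNneq ck => <-; rewrite eK.
- by rewrite eK sc.
- move=> k'; case Ek': (s (e' k')) => [c2|] //= [/(can_inj eK) c2c].
  by apply: (can_inj e'K); apply: cinj; rewrite Ek' c2c.
Qed.

End Relabel.

Lemma split_lshift n m (i : 'I_n) : split (lshift m i) = inl i.
Proof. exact: (unsplitK (inl i)). Qed.

Lemma split_rshift n m (i : 'I_m) : split (rshift n i) = inr i.
Proof. exact: (unsplitK (inr i)). Qed.

Definition pad_basis n m (w : basis n) : basis (n + m) :=
  [ffun k => if split k is inl j then w j else false].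

Section PermutationOperators.
Variable C : numClosedFieldType.
Local Open Scope ring_scope.

Definition permop (T : finType) (f : T -> T) : opT C T := fun x y => (x == f y)%:R.

Lemma sum_delta_l (T : finType) (a : T) (F : T -> C) : \sum_y (y == a)%:R * F y = F a.
Proof.
by rewrite (bigD1 a) //= eqxx mul1r big1 ?addr0 // => y /negbTE->; rewrite mul0r.
Qed.

Lemma sum_delta_r (T : finType) (a : T) (F : T -> C) : \sum_y F y * (y == a)%:R = F a.
Proof. under eq_bigr => y _ do rewrite mulrC. exact: sum_delta_l. Qed.

Lemma permop_unitary (T : finType) (A : opT C T) f :
  A =2 permop f -> bijective f -> unitaryT A.
Proof.
move=> Af [g fK gK]; split=> x y; rewrite /opT_mul /opT_adj /opT_id.
  under eq_bigr => z _ do rewrite !Af /permop conjC_nat.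
  have fxz z : (x == f z) = (z == g x) by apply/eqP/eqP => [->|->]; rewrite ?fK ?gK.
  under eq_bigr => z _ do rewrite fxz.
  by rewrite sum_delta_l gK eq_sym.
under eq_bigr => z _ do rewrite !Af /permop conjC_nat.
by rewrite sum_delta_l (inj_eq (can_inj fK)).
Qed.

Definition cnot2 : opT C (bool * bool)%type := fun a b => (a == (b.1, b.1 (+) b.2))%:R.

Lemma cnot2_unitary : unitaryT cnot2.
Proof.
apply: (@permop_unitary _ _ (fun b : bool * bool => (b.1, b.1 (+) b.2))) => //.
by exists (fun b : bool * bool => (b.1, b.1 (+) b.2)); case=> [[] []].
Qed.

Section LayerOfGates.
Variable n : nat.
Implicit Types (s : cnot_layer 'I_n) (ss : seq (cnot_layer 'I_n)).

Definition layer_of s : layer C n :=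
  pmap (fun t => omap (fun c => G2 c t cnot2) (s t)) (enum 'I_n).

Lemma layer_of_supp s k :
  (k \in layer_supp (layer_of s)) = (s k != None) || [exists t, s t == Some k].
Proof.
rewrite /layer_supp big_pmap big_enum /=; apply/bigcupP/idP => [[t _]|].
  case Et: (s t) => [c|] /=; last by rewrite inE.
  rewrite !inE => /orP[]/eqP->; last by rewrite Et.
  by apply/orP; right; apply/existsP; exists t; rewrite Et.
case/orP => [|/existsP[t /eqP Et]].
  by case Ek: (s k) => [c|] // _; exists k; rewrite // Ek !inE eqxx orbT.
by exists t; rewrite // Et !inE eqxx.
Qed.

Lemma layer_of_entries s x y : \prod_(g <- layer_of s) gate_entry g x y =
  (all (fun t => if s t is Some c then (x c == y c) && (x t == y c (+) y t) else true)
       (enum 'I_n))%:R.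
Proof.
rewrite big_pmap; elim: (enum 'I_n) => [|t r IH] /=; first by rewrite big_nil.
rewrite big_cons IH; case: (s t) => [c|] /=; last by rewrite mul1r.
by rewrite /cnot2 xpair_eqE; case: (_ && _); rewrite ?mul1r ?mul0r.
Qed.

Lemma layer_op_of s : parallel s -> layer_op (layer_of s) =2 permop (layer_map s).
Proof.
move=> /parallelP sP x y; rewrite /layer_op layer_of_entries -natrM mulnb /permop.
congr (nat_of_bool _)%:R; apply/idP/eqP => [/andP[/allP xy /forallP xy_off]|->].
  apply/ffunP => k; rewrite ffunE.
  case Ek: (s k) => [c|].
    by move: (xy k (mem_enum _ k)); rewrite Ek => /andP[_ /eqP->]; rewrite addbC.
  case: (pickP (fun t => s t == Some k)) => [t /eqP Et|noctl].
    by move: (xy t (mem_enum _ t)); rewrite Et => /andP[/eqP-> _].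
  apply/eqP; move/implyP: (xy_off k); apply.
  by rewrite layer_of_supp Ek; apply/existsPn => t; rewrite noctl.
apply/andP; split.
  apply/allP => t _; case Et: (s t) => [c|] //; rewrite !ffunE Et.
  by have [_ -> _] := sP _ _ Et; rewrite addbC !eqxx.
apply/forallP => k; apply/implyP; rewrite layer_of_supp ffunE negb_or.
by case: (s k).
Qed.

Lemma layer_of_wf s : parallel s -> layer_wf (layer_of s).
Proof.
move=> /parallelP sP; split.
  rewrite /layer_of; elim: (enum 'I_n) => //= t r IH.
  case Et: (s t) => [c|] //=; split=> //; split; last exact: cnot2_unitary.
  by have [/eqP ? _ _] := sP _ _ Et.
rewrite /layer_of; elim: (enum 'I_n) (enum_uniq 'I_n) => //= t r IH /andP[tr ur].
case Et: (s t) => [c|] /=; last exact: IH.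
rewrite IH // andbT all_pmap; apply/allP => t' t'r /=.
case Et': (s t') => [c'|] //=.
have tt' : t' != t by apply: contraNneq tr => <-.
have [_ sc cinj] := sP _ _ Et; have [_ sc' _] := sP _ _ Et'.
rewrite -setI_eq0; apply/eqP/setP => k; rewrite !inE.
apply/negP => /andP[/orP[]/eqP-> /orP[]/eqP E].
- by move/eqP: tt'; apply; apply: cinj; rewrite Et' E.
- by rewrite E Et' in sc.
- by rewrite -E Et in sc'.
- by rewrite E eqxx in tt'.
Qed.

Lemma circuit_op_of ss :
  all parallel ss -> circuit_op (map layer_of ss) =2 permop (layers_map ss).
Proof.
elim: ss => [|s ss IH] //= /andP[sP ssP] x y; rewrite /opT_mul.
under eq_bigr => z _ do rewrite IH // layer_op_of // mulrC.
exact: sum_delta_l.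
Qed.

Lemma circuit_of_wf ss : all parallel ss -> circuit_wf (map layer_of ss).
Proof. by elim: ss => //= s ss IH /andP[sP ssP]; split; [apply: layer_of_wf|apply: IH]. Qed.

End LayerOfGates.

Lemma pad_sum n m (v : basis n -> C) z :
  pad (m := m) v z = \sum_w (z == pad_basis m w)%:R * v w.
Proof.
rewrite /pad; case: ifP => [anc0|anc1].
  have zw w : (z == pad_basis m w) = (w == [ffun i => z (lshift m i)]).
    apply/eqP/eqP => [->|->]; first by apply/ffunP => i; rewrite !ffunE split_lshift.
    apply/ffunP => k; rewrite -(splitK k); case: (split k) => j /=; rewrite !ffunE.
      by rewrite split_lshift ffunE.
    by rewrite split_rshift; move/forallP: anc0 => /(_ j) /negbTE.
  by under eq_bigr => w _ do rewrite zw; rewrite sum_delta_l.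
rewrite big1 // => w _; case: eqP => [zw|]; last by rewrite mul0r.
move: anc1; rewrite zw; suff -> : [forall k, ~~ pad_basis m w (rshift n k)] by [].
by apply/forallP => k; rewrite ffunE split_rshift.
Qed.

(* Both sides are sums over [w] of [v w] times the indicator of [z = pad (f w)]. *)
Lemma embeds_permop n m (F : op C n) (M : op C (n + m)) f g :
  F =2 permop f -> M =2 permop g ->
  (forall w, g (pad_basis m w) = pad_basis m (f w)) -> embeds F M.
Proof.
move=> Ff Mg gf v z; rewrite /apply pad_sum.
under eq_bigr => y _ do rewrite Mg /permop pad_sum mulr_sumr.
rewrite exchange_big /=.
under eq_bigr => w _ do under eq_bigr => y _ do
  rewrite mulrCA mulrA -[(y == _)%:R * _]mulrC.
under eq_bigr => w _ do rewrite -mulr_suml sum_delta_r gf.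
under [RHS]eq_bigr => w' _ do rewrite mulr_sumr.
rewrite [RHS]exchange_big /=; apply: eq_bigr => w _.
under eq_bigr => w' _ do rewrite Ff /permop mulrCA mulrA -[(w' == _)%:R * _]mulrC.
by rewrite -mulr_suml sum_delta_r.
Qed.

End PermutationOperators.

Section CnotCircuitMap.
Variable n : nat.
Implicit Types (x y : basis n) (s : cnot_circuit n) (g : basis n -> basis n).

Definition xorv x y : basis n := [ffun i => x i (+) y i].
Definition zerov : basis n := [ffun _ => false].
Definition unitv (j : 'I_n) : basis n := [ffun k => k == j].

Definition xor_additive g := {morph g : x y / xorv x y}.

Definition mulv (M : 'I_n -> 'I_n -> bool) x : basis n :=
  [ffun i => \big[addb/false]_(j < n) (M i j && x j)].

Definition matrix_of g : 'I_n -> 'I_n -> bool := fun i j => g (unitv j) i.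

Lemma xor0v x : xorv zerov x = x.
Proof. by apply/ffunP => i; rewrite !ffunE. Qed.

Lemma xorvv x : xorv x x = zerov.
Proof. by apply/ffunP => i; rewrite !ffunE addbb. Qed.

Lemma xor_additive0 g : xor_additive g -> g zerov = zerov.
Proof.
move=> gD; apply/ffunP => k; have /(congr1 (fun v : basis n => v k)) := gD zerov zerov.
by rewrite xorvv !ffunE; case: (g zerov k).
Qed.

Lemma xorv_sum_apply I (r : seq I) (P : pred I) (F : I -> basis n) k :
  (\big[xorv/zerov]_(i <- r | P i) F i) k = \big[addb/false]_(i <- r | P i) F i k.
Proof. by apply: (big_morph (fun v : basis n => v k)) => [u v|]; rewrite ffunE. Qed.

Lemma sum_unitv x : \big[xorv/zerov]_(j | x j) unitv j = x.
Proof.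
apply/ffunP => k; rewrite xorv_sum_apply big_mkcond /= (bigD1 k) //=.
rewrite big1 => [|j /negbTE jk].
  by rewrite ffunE eqxx addbF; case: (x k).
by rewrite ffunE eq_sym jk if_same.
Qed.

Lemma xor_additive_mulv g : xor_additive g -> g =1 mulv (matrix_of g).
Proof.
move=> gD x; apply/ffunP => i; rewrite -{1}(sum_unitv x).
rewrite (big_morph g gD (xor_additive0 gD)) xorv_sum_apply big_mkcond ffunE.
by apply: eq_bigr => j _; rewrite /matrix_of andbC; case: (x j).
Qed.

Fixpoint cnot_circuit_map s y :=
  if s is p :: s' then cnot_circuit_map s' (cnot_map p.1 p.2 y) else y.

Lemma cnot_circuit_opE (C : numClosedFieldType) s :
  cnot_circuit_op C s =2 permop C (cnot_circuit_map s).
Proof.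
elim: s => [|p s IH] x y //=; rewrite /opT_mul.
by under eq_bigr => z _ do rewrite IH; apply: sum_delta_r.
Qed.

Lemma cnot_circuit_map_additive s : xor_additive (cnot_circuit_map s).
Proof.
elim: s => [|[c t] s IH] //= x y; rewrite -IH; congr cnot_circuit_map.
by apply/ffunP => k; rewrite !ffunE; case: ifP; rewrite ?ffunE // addbACA.
Qed.

Lemma cnot_mapK (c t : 'I_n) : c != t -> involutive (cnot_map c t).
Proof.
move=> ct y; apply/ffunP => k; rewrite !ffunE.
by case: eqP => [->|] //; rewrite (negbTE ct) eqxx addbA addbb.
Qed.

Lemma cnot_circuit_map_bij s : cnot_wf s -> bijective (cnot_circuit_map s).
Proof.
elim: s => [|[c t] s IH] /=; first by exists id.
case/andP=> ct /IH sB; apply: (@bij_comp _ _ _ (cnot_circuit_map s)) => //.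
exact/inv_bij/cnot_mapK.
Qed.

End CnotCircuitMap.

Arguments zerov {n}.

Lemma expn2_gt0 t : 0 < 2 ^ t. Proof. by rewrite expn_gt0. Qed.

Lemma next_multiple d k m : d %| k -> d %| m -> k < m -> k + d <= m.
Proof.
move=> /dvdnP[a ->] /dvdnP[b ->] lt_ab.
have d_gt0 : 0 < d by case: d lt_ab => //; rewrite !muln0.
by rewrite ltn_pmul2r // in lt_ab; rewrite -mulSnr leq_pmul2r.
Qed.

Lemma iota0S t : iota 0 t.+1 = rcons (iota 0 t) t.
Proof. by rewrite -addn1 iotaD cats1. Qed.

Lemma big_addb_insub m N (F : 'I_m -> bool) : m <= N ->
  \big[addb/false]_(0 <= l < N) (if insub l is Some j then F j else false) =
  \big[addb/false]_(j < m) F j.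
Proof.
move=> le_mN; pose F' l := if insub l is Some j then F j else false.
have -> : \big[addb/false]_(j < m) F j = \big[addb/false]_(j < m) F' j.
  by apply: eq_bigr => j _; rewrite /F' valK.
rewrite (big_ord_widen _ F' le_mN) [RHS]big_mkcond big_mkord.
by apply: eq_bigr => l _; case: ltnP => // le_ml; rewrite insubN // -leqNgt.
Qed.

Section ParityNetwork.
Variables (n r : nat).
Local Notation N := (2 ^ r).

(* Input and output registers, an N x n fan-out array and an n x N summation array. *)
Local Notation ancilla := ('I_n + (('I_N * 'I_n) + ('I_n * 'I_N)))%type.
Local Notation qubit := ('I_n + ancilla)%type.
Local Notation m := #|{: ancilla}|.

Implicit Types (b : bool) (M : 'I_n -> 'I_n -> bool) (x z : basis n).
Implicit Types (y : {ffun qubit -> bool}) (q : qubit).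

Definition ordN0 : 'I_N := Ordinal (expn2_gt0 r).

Definition reg b (j : 'I_n) : qubit := if b then inr (inl j) else inl j.
Definition fan (i : 'I_N) (j : 'I_n) : qubit := inr (inr (inl (i, j))).
Definition acc (i : 'I_n) (k : 'I_N) : qubit := inr (inr (inr (i, k))).

Definition in_reg b : pred qubit :=
  fun q => match q with inl _ => ~~ b | inr (inl _) => b | _ => false end.

Definition regs x z : {ffun qubit -> bool} :=
  [ffun q => match q with inl j => x j | inr (inl j) => z j | _ => false end].

(* Clean ancillae, [u] in register [reg b] and [v] in the other register. *)
Definition regs_from b u v := if b then regs v u else regs u v.

Definition acc_at y i (l : nat) : bool :=
  if insub l is Some k then y (acc i k) else false.

Definition copy_in b : cnot_layer qubit := fun q =>
  if q is inr (inr (inl (i, j))) then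
    if val i == 0 then Some (reg b j) else None
  else None.

Definition fan_out t : cnot_layer qubit := fun q =>
  if q is inr (inr (inl (i, j))) then
    if 2 ^ t <= i < 2 ^ t.+1 then omap (fan^~ j) (insub (i - 2 ^ t)) else None
  else None.

Definition fold t : cnot_layer qubit := fun q =>
  if q is inr (inr (inr (i, k))) then
    if 2 ^ t.+1 %| k then omap (acc i) (insub (k + 2 ^ t)) else None
  else None.

Definition on_reg b (F : 'I_n -> qubit) : cnot_layer qubit := fun q =>
  match q with
  | inl j => if b then None else Some (F j)
  | inr (inl j) => if b then Some (F j) else None
  | _ => None
  end.

Definition copy_out b := on_reg b (acc^~ ordN0).
Definition swap_step b := on_reg b (reg (~~ b)).

Definition swap_layers := [:: swap_step false; swap_step true; swap_step false].

Lemma copy_in_some b q c : copy_in b q = Some c ->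
  exists i j, [/\ q = fan i j, c = reg b j & i = 0 :> nat].
Proof.
case: q => [j|[j|[[i j]|[i k]]]] //=; case: ifP => // /eqP i0 [<-].
by exists i, j.
Qed.

Lemma fan_out_some t q c : fan_out t q = Some c -> exists i j (i' : 'I_N),
  [/\ q = fan i j, c = fan i' j, 2 ^ t <= i, i < 2 ^ t.+1 & i' = i - 2 ^ t :> nat].
Proof.
case: q => [j|[j|[[i j]|[i k]]]] //=; case: ifP => // /andP[lb ub].
by case: insubP => //= i' _ i'E [<-]; exists i, j, i'.
Qed.

Lemma fold_some t q c : fold t q = Some c -> exists i (k k' : 'I_N),
  [/\ q = acc i k, c = acc i k', 2 ^ t.+1 %| k & k' = k + 2 ^ t :> nat].
Proof.
case: q => [j|[j|[[i j]|[i k]]]] //=; case: ifP => // dvd_k.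
by case: insubP => //= k' _ k'E [<-]; exists i, k, k'.
Qed.

Lemma on_reg_some b F q c : on_reg b F q = Some c -> exists j, q = reg b j /\ c = F j.
Proof. by case: b; case: q => [j|[j|[[i j]|[i k]]]] //= [<-]; exists j. Qed.

Lemma copy_in_parallel b : parallel (copy_in b).
Proof.
apply/parallelP => q c /copy_in_some [i [j [-> -> i0]]].
split; [by case: b | by case: b |] => q' /copy_in_some [i' [j' [-> + i'0]]].
have -> : i' = i by apply: val_inj; rewrite /= i0 i'0.
by case: b => -[->].
Qed.

Lemma fan_out_parallel t : parallel (fan_out t).
Proof.
apply/parallelP => q c /fan_out_some [i [j [i' [-> -> lb ub i'E]]]]; split.
- apply/eqP => -[ii']; move: i'E; rewrite ii'; have := expn2_gt0 t; lia.
- rewrite /= i'E; case: ifP => // /andP[lb' _]; move: lb'; rewrite expnS in ub; lia.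
- move=> q' /fan_out_some [i2 [j2 [i2' [-> [E1 E2] lb2 _ i2'E]]]].
  by rewrite E2; congr (fan _ _); apply: val_inj; move: i'E i2'E; rewrite E1 /=; lia.
Qed.

Lemma fold_parallel t : t < r -> parallel (fold t).
Proof.
move=> tr; apply/parallelP => q c /fold_some [i [k [k' [-> -> dvd_k k'E]]]]; split.
- apply/eqP => -[kk']; move: k'E; rewrite kk'; have := expn2_gt0 t; lia.
- rewrite /= k'E; case: ifP => //; rewrite dvdn_addr // expnS => /dvdn_leq.
  by have := expn2_gt0 t; lia.
- move=> q' /fold_some [i2 [k2 [k2' [-> [E1 E2] _ k2'E]]]].
  by rewrite E1; congr (acc _ _); apply: val_inj; move: k'E k2'E; rewrite E2 /=; lia.
Qed.

Lemma reg_in_reg b j : in_reg b (reg b j).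
Proof. by case: b. Qed.

Lemma on_reg_off b F q : ~~ in_reg b q -> on_reg b F q = None.
Proof. by case: b; case: q => [j|[j|a]]. Qed.

Lemma on_reg_parallel b F : (forall j, ~~ in_reg b (F j)) -> injective F ->
  parallel (on_reg b F).
Proof.
move=> Fout Finj; apply/parallelP => q c /on_reg_some [j [-> ->]]; split.
- by apply: contraNneq (Fout j) => ->; apply: reg_in_reg.
- exact: on_reg_off.
- by move=> q' /on_reg_some [j' [-> /Finj->]].
Qed.

Lemma copy_out_parallel b : parallel (copy_out b).
Proof. by apply: on_reg_parallel => // j j' []. Qed.

Lemma swap_step_parallel b : parallel (swap_step b).
Proof. by apply: on_reg_parallel => [j|j j']; case: b => //= -[]. Qed.

Lemma in_regP b q : in_reg b q -> exists j, q = reg b j.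
Proof. by case: b; case: q => [j|[j|a]] // _; exists j. Qed.

Lemma on_reg_reg b F j : on_reg b F (reg b j) = Some (F j).
Proof. by case: b. Qed.

Lemma regs_from_src b u v j : regs_from b u v (reg b j) = u j.
Proof. by case: b; rewrite ffunE. Qed.

Lemma regs_from_dst b u v j : regs_from b u v (reg (~~ b) j) = v j.
Proof. by case: b; rewrite ffunE. Qed.

Lemma regs_from_fan b u v i j : regs_from b u v (fan i j) = false.
Proof. by case: b; rewrite ffunE. Qed.

Lemma regs_from_acc b u v i k : regs_from b u v (acc i k) = false.
Proof. by case: b; rewrite ffunE. Qed.

Lemma regs_from_off b u v v' q :
  ~~ in_reg (~~ b) q -> regs_from b u v q = regs_from b u v' q.
Proof. by case: b; case: q => [j|[j|a]]; rewrite //= !ffunE. Qed.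

Lemma layers_map_fan_out b y t : (forall i j, y (fan i j) = false) -> t <= r ->
  layers_map (copy_in b :: map fan_out (iota 0 t)) y =
  [ffun q => if q is inr (inr (inl (i, j))) then (i < 2 ^ t) && y (reg b j) else y q].
Proof.
move=> y_fan0; elim: t => [|t IH] tr.
  apply/ffunP => -[j|[j|[[i j]|[i k]]]]; rewrite !ffunE //=.
  by move: (y_fan0 i j); rewrite /fan => ->; rewrite expn0 ltnS leqn0; case: (_ == 0).
rewrite iota0S map_rcons -rcons_cons layers_map_rcons IH ?(ltnW tr) //.
apply/ffunP => -[j|[j|[[i j]|[i k]]]]; rewrite !ffunE //=.
case: ifP => [/andP[lb ub]|out]; last first.
  by congr (_ && _); move: out; rewrite expnS; have := expn2_gt0 t; lia.
case: insubP => [i' _ /= i'E|/negP[]]; last exact: leq_ltn_trans (leq_subr _ _) (ltn_ord i).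
rewrite /= ffunE /fan i'E ub ltnNge lb /=.
by have -> : i - 2 ^ t < 2 ^ t by move: ub; rewrite expnS; lia.
Qed.

Lemma layers_map_fold_acc y t i (k : 'I_N) : t <= r -> 2 ^ t %| k ->
  layers_map (map fold (iota 0 t)) y (acc i k) =
  \big[addb/false]_(k <= l < k + 2 ^ t) acc_at y i l.
Proof.
elim: t k => [|t IH] k tr dvd_k.
  by rewrite addn1 big_nat1 /acc_at valK.
rewrite iota0S map_rcons layers_map_rcons ffunE /= dvd_k.
case: insubP => [k' _ k'E|/negP[]]; last first.
  have := next_multiple dvd_k (dvdn_exp2l 2 tr) (ltn_ord k).
  by rewrite expnS; have := expn2_gt0 t; lia.
have dvd_tk : 2 ^ t %| k by apply: dvdn_trans dvd_k; apply: dvdn_exp2l.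
rewrite /= !IH ?(ltnW tr) // ?k'E ?dvdn_addr //.
rewrite -big_cat_nat ?leq_addr ?leq_add2l ?leq_exp2l //.
by rewrite expnS mul2n -addnn addnA.
Qed.

Lemma layers_map_swap x z : layers_map swap_layers (regs x z) = regs z x.
Proof.
apply/ffunP => -[j|[j|a]]; do ! rewrite /= ffunE //.
all: by case: (x j); case: (z j).
Qed.

Definition ord_of_qubit (q : qubit) : 'I_(n + m) :=
  match q with inl j => lshift m j | inr a => rshift n (enum_rank a) end.

Definition qubit_of_ord (k : 'I_(n + m)) : qubit :=
  match split k with inl j => inl j | inr a => inr (enum_val a) end.

Lemma ord_of_qubitK : cancel ord_of_qubit qubit_of_ord.
Proof.
by case=> [j|a]; rewrite /qubit_of_ord /= ?split_lshift ?split_rshift ?enum_rankK.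
Qed.

Lemma qubit_of_ordK : cancel qubit_of_ord ord_of_qubit.
Proof.
move=> k; rewrite /qubit_of_ord -{2}(splitK k).
by case: (split k) => j //=; rewrite enum_valK.
Qed.

Lemma pull_pad_basis w : pull ord_of_qubit (pad_basis m w) = regs w zerov.
Proof.
by apply/ffunP => -[j|[j|a]]; rewrite !ffunE /= ?split_lshift ?split_rshift ?ffunE.
Qed.

Lemma card_ancilla : m = n + 2 * (N * n).
Proof. by rewrite !card_sum !card_prod !card_ord [n * _]mulnC addnn mul2n. Qed.

Hypothesis n_le_N : n <= N.

Definition select M : cnot_layer qubit := fun q =>
  if q is inr (inr (inr (i, k))) then
    if insub (val k) is Some j then
      if M i j then Some (fan (widen_ord n_le_N i) j) else None
    else None
  else None.

Lemma select_some M q c : select M q = Some c -> exists i k (j : 'I_n),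
  [/\ q = acc i k, c = fan (widen_ord n_le_N i) j, k = j :> nat & M i j].
Proof.
case: q => [j|[j|[[i j]|[i k]]]] //=; case: insubP => //= j _ jE.
by case: ifP => // Mij [<-]; exists i, k, j.
Qed.

Lemma select_parallel M : parallel (select M).
Proof.
apply/parallelP => q c /select_some [i [k [j [-> -> kj _]]]]; split=> //.
move=> q' /select_some [i2 [k2 [j2 [-> [E1 E2] k2j2 _]]]].
by congr (acc _ _); apply: val_inj; rewrite //= kj k2j2 E2.
Qed.

Definition mulv_layers b M :=
  copy_in b :: map fan_out (iota 0 r) ++ select M :: map fold (iota 0 r).

Definition xor_mulv_layers b M :=
  mulv_layers b M ++ copy_out (~~ b) :: rev (mulv_layers b M).

Definition network M M' :=
  xor_mulv_layers false M ++ xor_mulv_layers true M' ++ swap_layers.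

Lemma size_network M M' : size (network M M') = 8 * r + 13.
Proof.
rewrite /network /xor_mulv_layers /mulv_layers !size_cat /= !size_rev /=.
by rewrite !size_cat /= !size_map size_iota; lia.
Qed.

Lemma mulv_layers_parallel b M : all parallel (mulv_layers b M).
Proof.
rewrite /mulv_layers /= all_cat /=; apply/and4P; split.
- exact: copy_in_parallel.
- exact/all_mapT/fan_out_parallel.
- exact: select_parallel.
- by rewrite all_map; apply/allP => t; rewrite mem_iota add0n => /andP[_ /fold_parallel].
Qed.

Lemma mulv_layers_avoids b M : all (avoids (in_reg (~~ b))) (mulv_layers b M).
Proof.
rewrite /mulv_layers /= all_cat /=; apply/and4P; split.
- by apply/avoidsP => q c /copy_in_some [i [j [-> -> _]]]; case: b.
- by apply: all_mapT => t; apply/avoidsP => q c /fan_out_some [i [j [i' [-> -> _ _ _]]]].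
- by apply/avoidsP => q c /select_some [i [k [j [-> -> _ _]]]].
- by apply: all_mapT => t; apply/avoidsP => q c /fold_some [i [k [k' [-> -> _ _]]]].
Qed.

Lemma mulv_layers_acc0 b M y i :
  (forall i j, y (fan i j) = false) -> (forall i k, y (acc i k) = false) ->
  layers_map (mulv_layers b M) y (acc i ordN0) =
  \big[addb/false]_(j < n) (M i j && y (reg b j)).
Proof.
move=> y_fan0 y_acc0; rewrite /mulv_layers -cat_cons layers_map_cat layers_map_fan_out //=.
rewrite layers_map_fold_acc ?dvdn0 // add0n -(big_addb_insub _ n_le_N).
apply: eq_big_nat => l /andP[_ lt_lN].
rewrite /acc_at insubT /= !ffunE /= y_acc0.
case: insubP => //= j _ _; case: (M i j) => //=.
by rewrite ffunE /fan /= (leq_trans (ltn_ord i) n_le_N).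
Qed.

Lemma xor_mulv_layers_regs b M u v :
  layers_map (xor_mulv_layers b M) (regs_from b u v) =
  regs_from b u (xorv v (mulv M u)).
Proof.
have cp_dst t c : copy_out (~~ b) t = Some c -> in_reg (~~ b) t.
  by case/on_reg_some => j [-> _]; apply: reg_in_reg.
have ssD := mulv_layers_avoids b M.
apply/ffunP => q; rewrite (layers_map_uncompute _ _ (mulv_layers_parallel b M) ssD cp_dst).
case: ifP => [/in_regP[j ->]|/negbT Dq]; last exact: regs_from_off.
rewrite ffunE /copy_out on_reg_reg (layers_map_avoided (D := in_reg (~~ b))) ?reg_in_reg //.
rewrite mulv_layers_acc0 => [|i' j'|i' k]; rewrite ?regs_from_fan ?regs_from_acc //.
rewrite !regs_from_dst !ffunE; congr addb; apply: eq_bigr => k _.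
by rewrite regs_from_src.
Qed.

Lemma xor_mulv_layers_parallel b M : all parallel (xor_mulv_layers b M).
Proof.
by rewrite all_cat -cat1s all_cat all_rev mulv_layers_parallel /= copy_out_parallel.
Qed.

Lemma network_parallel M M' : all parallel (network M M').
Proof.
rewrite /network all_cat xor_mulv_layers_parallel all_cat xor_mulv_layers_parallel.
by rewrite /= !swap_step_parallel.
Qed.

Lemma layers_map_network f g x : xor_additive f -> xor_additive g -> cancel f g ->
  layers_map (network (matrix_of f) (matrix_of g)) (regs x zerov) = regs (f x) zerov.
Proof.
move=> fD gD fK.
have compute_f := xor_mulv_layers_regs false (matrix_of f) x zerov.
have erase_x := xor_mulv_layers_regs true (matrix_of g) (f x) x.
rewrite /regs_from -!xor_additive_mulv // xor0v fK xorvv in compute_f erase_x.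
by rewrite /network layers_map_cat compute_f layers_map_cat erase_x layers_map_swap.
Qed.

Lemma cnot_circuit_network (C : numClosedFieldType) (s : cnot_circuit n) :
  cnot_wf s -> exists ls : circuit C (n + m),
    [/\ circuit_wf ls, size ls = 8 * r + 13 &
        embeds (cnot_circuit_op C s) (circuit_op ls)].
Proof.
move=> s_wf; have [g fK gK] := cnot_circuit_map_bij s_wf.
have fD := cnot_circuit_map_additive s.
have gD : xor_additive g by move=> u v; apply: (can_inj fK); rewrite fD !gK.
set ss := map (relabel ord_of_qubit qubit_of_ord)
              (network (matrix_of (cnot_circuit_map s)) (matrix_of g)).
have ssP : all parallel ss.
  rewrite all_map; apply: sub_all (network_parallel _ _) => l.
  by move/(relabel_parallel ord_of_qubitK qubit_of_ordK).
exists (map (@layer_of C _) ss); split.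
- exact: circuit_of_wf.
- by rewrite !size_map size_network.
apply: embeds_permop (cnot_circuit_opE C s) (circuit_op_of C ssP) _ => w.
apply: (pull_inj qubit_of_ordK).
rewrite pull_layers_map; last exact: ord_of_qubitK.
by rewrite !pull_pad_basis layers_map_network.
Qed.

End ParityNetwork.

Lemma cnot_circuit_log_depth (C : numClosedFieldType) n (s : cnot_circuit n) :
  0 < n -> cnot_wf s ->
  exists m, m <= 5 * n ^ 2 /\ exists ls : circuit C (n + m),
    circuit_wf ls /\ size ls <= 29 * trunc_log 2 n /\
    embeds (cnot_circuit_op C s) (circuit_op ls).
Proof.
move=> n_gt0 s_wf; have [n_le1|n_gt1] := leqP n 1.
  (* [trunc_log 2 1 = 0] forces depth 0, but a one-qubit CNOT circuit is empty. *)
  have n1 : n = 1 by apply/eqP; rewrite eqn_leq n_le1.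
  subst n; have -> : s = [::].
    by case: s s_wf => [|[c t] s] //=; rewrite (ord1 c) (ord1 t) eqxx.
  exists 0; split=> //; exists [::]; do 2 split=> //.
  exact: (@embeds_permop _ _ _ _ _ id id).
have n_le_N : n <= 2 ^ (trunc_log 2 n).+1 := ltnW (trunc_log_ltn n (isT : 1 < 2)).
have [ls [ls_wf ls_size ls_embeds]] := cnot_circuit_network n_le_N C s_wf.
have /andP[le_Nn _] := trunc_log_bounds (isT : 1 < 2) n_gt0.
have log_gt0 : 0 < trunc_log 2 n by rewrite trunc_log_gt0.
eexists; split; last by exists ls; rewrite ls_size; do 2 split=> //; lia.
rewrite card_ancilla; move: le_Nn; rewrite expnS; nia.
Qed.

Theorem proposition6 (C : numClosedFieldType) :
  (exists c1 c2 : nat, forall (n : nat) (s : cnot_circuit n),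
     (0 < n)%N -> cnot_wf s ->
     exists m : nat, (m <= c2 * n ^ 2)%N /\
       exists ls : circuit C (n + m),
         circuit_wf ls /\ (size ls <= c1 * trunc_log 2 n)%N /\
         embeds (cnot_circuit_op C s) (circuit_op ls))
  /\
  (forall Cf : forall n : nat, cnot_circuit n,
     (forall n, (0 < n)%N -> cnot_wf (Cf n)) ->
     in_QNC1 (fun n => cnot_circuit_op C (Cf n))).
Proof.
split=> [|Cf Cf_wf]; first by exists 29, 5 => n s; apply: cnot_circuit_log_depth.
split=> [n n_gt0|]; last first.
  by exists 29, 5, 2 => n n_gt0; apply: cnot_circuit_log_depth (Cf_wf n n_gt0).
exact: permop_unitary (cnot_circuit_opE C _) (cnot_circuit_map_bij (Cf_wf n n_gt0)).
Qed.
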